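(* Consider a shallow ReLU network without biases with widths $n_0,n_1,n_2$ and activation patterns $A_1,\dots,A_k\in\{0,1\}^{n_1}$. For every $\lambda\in\mathbb{Z}^k$, the ideal $J^{\mathbf{A}}$ contains all $\big(|\operatorname{supp}(\sum_{i\in[k]}\lambda_iA_i)|+1\big)$-minors of the matrix $\sum_{i\in[k]}\lambda_iM_i$.
   Context: Parameters are $W^{(1)}\in\mathbb{R}^{n_1\times n_0}$, $W^{(2)}\in\mathbb{R}^{n_2\times n_1}$, and $M_A(\theta)=W^{(2)}\operatorname{diag}(A)W^{(1)}$. $J^{\mathbf{A}}\subseteq\mathbb{C}[m^{(i)}_{jl}: i\in[k], j\in[n_2], l\in[n_0]]$ is the ideal of all polynomials vanishing on the Zariski closure in $(\mathbb{C}^{n_2\times n_0})^k$ of $\{(M_{A_1}(\theta),\dots,M_{A_k}(\theta)):\theta\}$, where $M_i=(m^{(i)}_{jl})$ are coordinate matrices. $\operatorname{supp}(v)$ is the set of nonzero coordinates of $v\in\mathbb{Z}^{n_1}$. *)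

From HB Require Import structures.
From mathcomp Require Import all_boot all_order all_algebra.
From mathcomp Require Import mpoly.
From mathcomp Require Import complex.
Set Implicit Arguments. Unset Strict Implicit. Unset Printing Implicit Defensive.
Import Order.TTheory GRing.Theory Num.Theory.
Local Open Scope ring_scope.

(* Index type of the coordinates m^{(i)}_{jl}, i in [k], j in [n2], l in [n0]. *)
Definition coordT (k n2 n0 : nat) : finType := ('I_k * 'I_n2 * 'I_n0)%type.
Definition nvars (k n2 n0 : nat) : nat := #|{: coordT k n2 n0}|.

(* The polynomial ring C[m^{(i)}_{jl}], with C = R[i] for a real closed field R
   (for R the real numbers this is the usual complex numbers). *)
Definition polyring (R : rcfType) (k n2 n0 : nat) :=
  {mpoly (complex R)[nvars k n2 n0]}.

Definition mvar (R : rcfType) (k n2 n0 : nat) (i : 'I_k) (j : 'I_n2) (l : 'I_n0)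
  : polyring R k n2 n0 := 'X_(enum_rank ((i, j, l) : coordT k n2 n0)).

Definition Mcoord (R : rcfType) (k n2 n0 : nat) (i : 'I_k)
  : 'M[polyring R k n2 n0]_(n2, n0) := \matrix_(j, l) mvar R i j l.

(* A point of (C^{n2 x n0})^k, encoded as a valuation of the variables. *)
Definition point (R : rcfType) (k n2 n0 : nat)
  (Ms : 'I_k -> 'M[complex R]_(n2, n0)) : 'I_(nvars k n2 n0) -> complex R :=
  fun r => let: (i, j, l) := enum_val r in Ms i j l.

Definition MA (R : rcfType) (n0 n1 n2 : nat) (A : 'I_n1 -> bool)
  (W1 : 'M[R]_(n1, n0)) (W2 : 'M[R]_(n2, n1)) : 'M[R]_(n2, n0) :=
  W2 *m diag_mx (\row_j ((A j)%:R : R)) *m W1.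

Definition realC (R : rcfType) (x : R) : complex R := Complex x 0.

Definition image_set (R : rcfType) (k n0 n1 n2 : nat) (As : 'I_k -> 'I_n1 -> bool)
  (x : 'I_(nvars k n2 n0) -> complex R) : Prop :=
  exists (W1 : 'M[R]_(n1, n0)) (W2 : 'M[R]_(n2, n1)),
    x =1 point (fun i => map_mx (@realC R) (MA (As i) W1 W2)).

Definition vanishes_on (F : comNzRingType) (N : nat) (S : ('I_N -> F) -> Prop)
  (p : {mpoly F[N]}) : Prop := forall x, S x -> p.@[x] = 0.

Definition zariski_closure (F : comNzRingType) (N : nat) (S : ('I_N -> F) -> Prop)
  : ('I_N -> F) -> Prop := fun x => forall p, vanishes_on S p -> p.@[x] = 0.

Definition JA (R : rcfType) (k n0 n1 n2 : nat) (As : 'I_k -> 'I_n1 -> bool)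
  : polyring R k n2 n0 -> Prop :=
  vanishes_on (zariski_closure (@image_set R k n0 n1 n2 As)).

Definition supp (n : nat) (v : 'I_n -> int) : {set 'I_n} := [set j | v j != 0].

Definition is_minor (T : comNzRingType) (m n r : nat) (M : 'M[T]_(m, n)) (x : T) : Prop :=
  exists (f : 'I_r -> 'I_m) (g : 'I_r -> 'I_n),
    {homo f : a b / (a < b)%N >-> (a < b)%N} /\
    {homo g : a b / (a < b)%N >-> (a < b)%N} /\
    x = \det (mxsub f g M).

From HB Require Import structures.
From mathcomp Require Import all_boot all_order all_algebra.
From mathcomp Require Import mpoly.
From mathcomp Require Import complex.
Set Implicit Arguments. Unset Strict Implicit. Unset Printing Implicit Defensive.
Import Order.TTheory GRing.Theory Num.Theory.
Local Open Scope ring_scope.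

(* Evaluated at a point of the parametrized set, [\sum_i lam_i M_i] becomes
   [W2 *m diag_mx d *m W1] with [d = \sum_i lam_i A_i], a matrix of rank at
   most [|supp d|]; hence all its larger minors vanish on the set, and so on
   its Zariski closure. *)

Section MinorsOfLowRank.

Variable F : fieldType.

Lemma mxrank_sum_le (I : Type) (r : seq I) (P : pred I) m n (A : I -> 'M[F]_(m, n)) :
  (\rank (\sum_(i <- r | P i) A i)%R <= \sum_(i <- r | P i) \rank (A i))%N.
Proof.
apply: (big_ind2 (fun B k => \rank B <= k)%N) => //; first by rewrite mxrank0.
by move=> B1 k1 B2 k2 ? ?; apply: leq_trans (mxrank_add _ _) (leq_add _ _).
Qed.

Lemma mxrank_diag_mx_le n (d : 'rV[F]_n) :
  (\rank (diag_mx d) <= #|[pred i | d ord0 i != 0%R]|)%N.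
Proof.
rewrite diag_mx_sum_delta (bigID (fun i => d ord0 i == 0)) /=.
rewrite big1 ?add0r; last by move=> i /eqP ->; rewrite scale0r.
apply: leq_trans (mxrank_sum_le _ _ _) _.
rewrite -sum1_card; apply: leq_sum => i _.
by apply: leq_trans (mxrank_scale _ _) _; rewrite mxrank_delta.
Qed.

Lemma mxrank_mul_diag_le m n p (B : 'M[F]_(m, n)) (d : 'rV_n) (C : 'M_(n, p)) :
  (\rank (B *m diag_mx d *m C) <= #|[pred i | d ord0 i != 0%R]|)%N.
Proof.
apply: leq_trans (mxrankM_maxl _ _) _.
exact: leq_trans (mxrankM_maxr _ _) (mxrank_diag_mx_le d).
Qed.

Lemma mxrank_mxsub_le m n m' n' (f : 'I_m' -> 'I_m) (g : 'I_n' -> 'I_n)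
    (A : 'M[F]_(m, n)) :
  (\rank (mxsub f g A) <= \rank A)%N.
Proof.
rewrite -[A in mxsub _ _ A]mulmx1 mxsub_mul.
exact: leq_trans (mxrankM_maxl _ _) (mxrankS (rowsub_sub f A)).
Qed.

Lemma det_mxsub_eq0 m n r (f : 'I_r -> 'I_m) (g : 'I_r -> 'I_n) (A : 'M[F]_(m, n)) :
  (\rank A < r)%N -> \det (mxsub f g A) = 0.
Proof.
move=> rkA; apply/eqP; apply: contraTT rkA => det_neq0.
have : mxsub f g A \in unitmx by rewrite unitmxE unitfE.
rewrite -row_free_unit => /eqP rk_sub.
by rewrite -leqNgt -{1}rk_sub mxrank_mxsub_le.
Qed.

End MinorsOfLowRank.

Lemma scale_mul_diag_sum (T : comNzRingType) (I : finType) m n p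
    (B : 'M[T]_(m, n)) (C : 'M_(n, p)) (c : I -> T) (a : I -> 'rV_n) :
  \sum_i c i *: (B *m diag_mx (a i) *m C) = B *m diag_mx (\sum_i c i *: a i) *m C.
Proof.
rewrite linear_sum mulmx_sumr mulmx_suml; apply: eq_bigr => i _.
by rewrite linearZ -scalemxAr -scalemxAl.
Qed.

Lemma vanishes_on_zariski_closure (T : comNzRingType) N (S : ('I_N -> T) -> Prop) p :
  vanishes_on S p -> vanishes_on (zariski_closure S) p.
Proof. by move=> Sp x Sx; exact: Sx p Sp. Qed.

Section CoordinateMatrices.

Variables (R : rcfType) (k n2 n0 : nat).

Lemma meval_Mcoord (Ms : 'I_k -> 'M[complex R]_(n2, n0)) i :
  map_mx (meval (point Ms)) (@Mcoord R k n2 n0 i) = Ms i.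
Proof.
by apply/matrixP => j l; rewrite !mxE /mvar mevalXU /point enum_rankK.
Qed.

Lemma meval_lincomb_Mcoord (Ms : 'I_k -> 'M[complex R]_(n2, n0)) (lam : 'I_k -> int) :
  map_mx (meval (point Ms)) (\sum_i (lam i)%:~R *: @Mcoord R k n2 n0 i)
  = \sum_i (lam i)%:~R *: Ms i.
Proof.
rewrite raddf_sum; apply: eq_bigr => i _.
by rewrite !scaler_int raddfMz /= meval_Mcoord.
Qed.

End CoordinateMatrices.

Lemma lincomb_MA (R : rcfType) n0 n1 n2 k (As : 'I_k -> 'I_n1 -> bool)
    (lam : 'I_k -> int) (W1 : 'M[R]_(n1, n0)) (W2 : 'M[R]_(n2, n1)) :
  \sum_i (lam i)%:~R *: MA (As i) W1 W2
  = W2 *m diag_mx (\row_j (\sum_i lam i * (As i j)%:R)%:~R) *m W1.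
Proof.
rewrite scale_mul_diag_sum; congr (_ *m diag_mx _ *m _).
apply/rowP => j; rewrite !mxE summxE rmorph_sum; apply: eq_bigr => i _.
by rewrite !mxE rmorphM rmorph_nat.
Qed.

Theorem theorem7p1 (R : rcfType) (n0 n1 n2 k : nat)
  (As : 'I_k -> 'I_n1 -> bool) (lam : 'I_k -> int) (x : polyring R k n2 n0) :
  is_minor (#|supp (fun j => \sum_(i < k) lam i * (As i j)%:R)|.+1)
    (\sum_(i < k) (lam i)%:~R *: @Mcoord R k n2 n0 i) x ->
  @JA R k n0 n1 n2 As x.
Proof.
move=> [f [g [_ [_ ->]]]]; apply: vanishes_on_zariski_closure => z [W1 [W2 eq_z]].
rewrite (meval_eq _ eq_z) -det_map_mx map_mxsub meval_lincomb_Mcoord.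
have -> : \sum_i (lam i)%:~R *: map_mx (@realC R) (MA (As i) W1 W2)
          = map_mx (real_complex R) (\sum_i (lam i)%:~R *: MA (As i) W1 W2).
  by rewrite raddf_sum; apply: eq_bigr => i _; rewrite /= map_mxZ rmorph_int.
rewrite lincomb_MA -map_mxsub det_map_mx det_mxsub_eq0 ?rmorph0 //.
apply: leq_ltn_trans (mxrank_mul_diag_le _ _ _) _; rewrite ltnS cardsE.
by apply/eq_leq/eq_card => j; rewrite !inE mxE intr_eq0.
Qed.
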